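(* On $\mathcal V$ we have $B_2^{(1)}B_2^{(0)}=q\,B_2^{(0)}B_2^{(1)}$.
   Context: Plethystic notation: for a symmetric function $f$ and a rational expression $E$ in $x_1,\dots,x_N,q,t$, $f[E]$ is obtained by writing $f$ as a polynomial in the power sums $p_k$ and replacing each $p_k$ by $E$ with every variable $u$ replaced by $u^k$. Put $X=x_1+\cdots+x_N$ and $X^{tq}=X(1-t)/(1-q)$. $S_\mu$ is the Schur function; $S_{m,n}$ for the partition $(m,n)$, $S_m=S_{(m)}$, $S_0=1$. Let $\mathcal V$ be the $\mathbb Q[q,t]$-linear span of $\{S_\lambda[X^{tq}]:\ell(\lambda)\le2\}$, and define linear operators on $\mathcal V$ by, for $m\ge n\ge0$ (writing $S_k$ for $S_k[X^{tq}]$; products of single-row Schur functions expand into Schur functions of at most two rows): $B_2^{(0)}S_{m,n}[X^{tq}]=-q^{m+1}(1-q^{n+1})S_{m+1}S_{n+1}+q^n(1-q^{m+2})S_{m+2}S_n$, $B_2^{(1)}S_{m,n}[X^{tq}]=q^{m+n+1}\big((1-q^{n+1})S_{m+1}S_{n+1}-(1-q^{m+2})S_{m+2}S_n\big)$. *)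

From HB Require Import structures.
From mathcomp Require Import all_boot all_order all_algebra.
From mathcomp Require Import mpoly.
Set Implicit Arguments. Unset Strict Implicit. Unset Printing Implicit Defensive.
Import Order.TTheory GRing.Theory.
Local Open Scope ring_scope.

Definition Rqt := {mpoly rat[2]}.
Definition qv : Rqt := 'X_(ord0 : 'I_2).
Definition tv : Rqt := 'X_(lift ord0 (ord0 : 'I_1)).

(* Elements of V are finite formal linear combinations
   sum c_i * S_{(m_i,n_i)}[X^{tq}], encoded as a list of (c_i, (m_i, n_i)),
   with n_i <= m_i.  Two lists represent the same vector iff they have
   the same coefficient at every index (see [coefV]). *)
Definition vecV (R : Type) := seq (R * (nat * nat)).

Section V.
Variable R : comRingType.

Definition coefV (v : vecV R) (ij : nat * nat) : R :=
  \sum_(p <- v | p.2 == ij) p.1.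

Definition scaleV (c : R) (v : vecV R) : vecV R :=
  [seq (c * p.1, p.2) | p <- v].

(* S_a[X^{tq}] * S_b[X^{tq}] = sum_{k=0}^{min(a,b)} S_{(a+b-k,k)}[X^{tq}]
   (Pieri rule; plethysm is a ring morphism). *)
Definition SprodV (a b : nat) : vecV R :=
  [seq (1, (a + b - k, k)%N) | k <- iota 0 (minn a b).+1].

Definition applyV (B : nat -> nat -> vecV R) (v : vecV R) : vecV R :=
  flatten [seq scaleV p.1 (B p.2.1 p.2.2) | p <- v].

Variable q : R.

Definition B20_basis (m n : nat) : vecV R :=
  scaleV (- (q ^+ m.+1 * (1 - q ^+ n.+1))) (SprodV m.+1 n.+1)
  ++ scaleV (q ^+ n * (1 - q ^+ m.+2)) (SprodV m.+2 n).

Definition B21_basis (m n : nat) : vecV R :=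
  scaleV (q ^+ (m + n).+1)
    (scaleV (1 - q ^+ n.+1) (SprodV m.+1 n.+1)
     ++ scaleV (- (1 - q ^+ m.+2)) (SprodV m.+2 n)).

Definition B20 := applyV B20_basis.
Definition B21 := applyV B21_basis.

Definition wfV (v : vecV R) : bool := all (fun p => p.2.2 <= p.2.1)%N v.
End V.

From HB Require Import structures.
From mathcomp Require Import all_boot all_order all_algebra.
From mathcomp Require Import mpoly.
From mathcomp Require Import ring zify.
Set Implicit Arguments.
Unset Strict Implicit.
Unset Printing Implicit Defensive.

Import GRing.Theory.
Local Open Scope ring_scope.

(* Both sides are linear, so it suffices to pair them with an arbitrary weight
   g on the basis and to treat one basis vector S_{m,n} at a time.  By the
   Pieri rule, pairing g with S_a S_b gives the partial sum G_N of g along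
   the first N = min(a,b)+1 points of the antidiagonal of degree a+b, so
   B21 S_{d-k,k} and B20 S_{d-k,k} are explicit combinations of G_{k+1} and
   G_{k+2}.  The point is that B21 S_{d-k,k} + q^(d+1) B20 S_{d-k,k} is the
   difference in k of (1 - q^k)(1 - q^(d+2-k)) G_{k+1}: after this
   telescoping both composites B21 B20 S_{m,n} and q B20 B21 S_{m,n} reduce
   to the same expression in finitely many partial sums. *)

Section Pairing.
Variable R : comRingType.
Implicit Types (g : nat * nat -> R) (u v : vecV R) (c : R).

Definition pairV g v : R := \sum_(p <- v) p.1 * g p.2.

Definition diagsum g (d N : nat) : R := \sum_(0 <= k < N) g (d - k, k)%N.

Lemma coefV_pairV v ij : coefV v ij = pairV (fun x => (x == ij)%:R) v.
Proof.
rewrite /coefV /pairV big_mkcond; apply: eq_bigr => p _.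
by case: eqP => _; rewrite ?mulr1 ?mulr0.
Qed.

Lemma pairV_cat g u v : pairV g (u ++ v) = pairV g u + pairV g v.
Proof. exact: big_cat. Qed.

Lemma pairV_scale g c v : pairV g (scaleV c v) = c * pairV g v.
Proof. by rewrite /pairV big_map mulr_sumr; apply: eq_bigr => p _; rewrite mulrA. Qed.

Lemma pairV_mull g c v : pairV (fun x => c * g x) v = c * pairV g v.
Proof. by rewrite /pairV mulr_sumr; apply: eq_bigr => p _; rewrite mulrCA. Qed.

Lemma eq_in_pairV g1 g2 v :
  (forall p, p \in v -> g1 p.2 = g2 p.2) -> pairV g1 v = pairV g2 v.
Proof. by move=> eq_g; apply: eq_big_seq => p /eq_g ->. Qed.

Lemma pairV_apply g B v :
  pairV g (applyV B v) = pairV (fun x => pairV g (B x.1 x.2)) v.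
Proof.
elim: v => [|p v IHv]; first by rewrite /pairV !big_nil.
by rewrite /applyV /= pairV_cat pairV_scale -/(applyV B v) IHv /pairV big_cons.
Qed.

Lemma pairV_Sprod g a b : pairV g (SprodV R a b) = diagsum g (a + b) (minn a b).+1.
Proof.
rewrite /pairV /SprodV big_map /diagsum /index_iota subn0.
by apply: eq_bigr => k _; rewrite mul1r.
Qed.

Lemma pairV_Sprod_diag g B F :
    (forall m n, (n <= m)%N -> pairV g (B m n) = F (m + n)%N n) ->
  forall a b, pairV (fun x => pairV g (B x.1 x.2)) (SprodV R a b)
  = \sum_(0 <= k < (minn a b).+1) F (a + b)%N k.
Proof.
move=> pairV_B a b; rewrite pairV_Sprod; apply: eq_big_nat => k /andP[_ k_le].
by rewrite /= pairV_B ?subnK //; lia.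
Qed.

End Pairing.

Lemma minn_Sprod_B2 m n : (n <= m)%N -> minn m.+1 n.+1 = n.+1 /\ minn m.+2 n = n.
Proof. by move=> le_nm; split; apply/minn_idPr; lia. Qed.

Section DiagonalForms.
Variables (R : comRingType) (q : R) (g : nat * nat -> R).

Definition B21_diag (d k : nat) : R :=
  q ^+ d.+1 * ((1 - q ^+ k.+1) * diagsum g d.+2 k.+2
               - (1 - q ^+ (d - k).+2) * diagsum g d.+2 k.+1).

Definition B20_diag (d k : nat) : R :=
  - (q ^+ (d - k).+1 * (1 - q ^+ k.+1)) * diagsum g d.+2 k.+2
  + q ^+ k * (1 - q ^+ (d - k).+2) * diagsum g d.+2 k.+1.

Definition B2_potential (d k : nat) : R :=
  (1 - q ^+ k) * (1 - q ^+ (d.+2 - k)) * diagsum g d.+2 k.+1.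

Lemma pairV_B21_basis m n :
  (n <= m)%N -> pairV g (B21_basis q m n) = B21_diag (m + n) n.
Proof.
move=> le_nm; rewrite /B21_basis !(pairV_scale, pairV_cat, pairV_Sprod).
have [-> ->] := minn_Sprod_B2 le_nm.
by rewrite !addSn !addnS /B21_diag addnK; ring.
Qed.

Lemma pairV_B20_basis m n :
  (n <= m)%N -> pairV g (B20_basis q m n) = B20_diag (m + n) n.
Proof.
move=> le_nm; rewrite /B20_basis !(pairV_scale, pairV_cat, pairV_Sprod).
have [-> ->] := minn_Sprod_B2 le_nm.
by rewrite !addSn !addnS /B20_diag addnK; ring.
Qed.

Lemma B21_B20_diag_telescope d k : (k < d)%N ->
  B21_diag d k + q ^+ d.+1 * B20_diag d k
  = q ^+ d.+1 * (B2_potential d k.+1 - B2_potential d k).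
Proof.
move=> lt_kd; rewrite /B21_diag /B20_diag /B2_potential.
have -> : (d.+2 - k.+1 = (d - k).+1)%N by lia.
have -> : (d.+2 - k = (d - k).+2)%N by lia.
rewrite !exprS; ring.
Qed.

Lemma sum_B21_diag d N : (N <= d)%N ->
  \sum_(0 <= k < N) B21_diag d k
  = q ^+ d.+1 * (B2_potential d N - \sum_(0 <= k < N) B20_diag d k).
Proof.
move=> le_Nd; apply/eqP; rewrite mulrBr -subr_eq opprK mulr_sumr -big_split /=.
rewrite (eq_big_nat _ _
  (F2 := fun k => q ^+ d.+1 * (B2_potential d k.+1 - B2_potential d k))); last first.
  by move=> k /andP[_ lt_kN]; apply: B21_B20_diag_telescope; lia.
by rewrite -mulr_sumr telescope_sumr // /B2_potential expr0 subrr !mul0r subr0.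
Qed.

End DiagonalForms.

Lemma pairV_B21_B20_basis (R : comRingType) (q : R) g m n : (n <= m)%N ->
  pairV g (B21 q (B20_basis q m n)) = q * pairV g (B20 q (B21_basis q m n)).
Proof.
move=> le_nm; rewrite /B21 /B20 !pairV_apply /B20_basis /B21_basis.
rewrite !(pairV_scale, pairV_cat) !(pairV_Sprod_diag (pairV_B21_basis q g)).
rewrite !(pairV_Sprod_diag (pairV_B20_basis q g)).
have [-> ->] := minn_Sprod_B2 le_nm.
rewrite !addSn !addnS.
rewrite !(big_nat_recr n.+1) //= sum_B21_diag; last by lia.
rewrite /B21_diag /B20_diag /B2_potential.
have -> : ((m + n).+2 - n.+1 = m.+1)%N by lia.
have -> : ((m + n).+4 - n.+1 = m.+3)%N by lia.
rewrite !exprS !exprD; ring.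
Qed.

Lemma pairV_B21_B20 (R : comRingType) (q : R) g v : wfV v ->
  pairV g (B21 q (B20 q v)) = q * pairV g (B20 q (B21 q v)).
Proof.
move=> /allP wf_v; rewrite /B21 /B20 !pairV_apply -pairV_mull.
apply: eq_in_pairV => p /wf_v le_p.
by rewrite -!pairV_apply; apply: pairV_B21_B20_basis le_p.
Qed.

Theorem mainTheorem10 :
  forall v : vecV Rqt, wfV v ->
  forall ij : nat * nat,
    coefV (B21 qv (B20 qv v)) ij = qv * coefV (B20 qv (B21 qv v)) ij.
Proof. by move=> v wf_v ij; rewrite !coefV_pairV; apply: pairV_B21_B20. Qed.
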